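(* Let $\mathcal{H}$ be a real Hilbert space, $A:\mathcal{H}\rightrightarrows\mathcal{H}$ maximal monotone, $p\geq2$ an integer and $\theta\in(0,1)$. Let $\Omega=\{x\in\mathcal{H}:0\notin Ax\}$ and, for $x\in\Omega$, let $\Lambda_\theta(x)$ be the unique $\lambda>0$ with $\lambda^{1/(p-1)}\|x-(I+\lambda A)^{-1}x\|=\theta^{1/(p-1)}$. Define on $\mathcal{H}$ \[ \Gamma_\theta(x)=\Big(\inf\{\alpha>0:\|x-(I+\alpha^{-1}A)^{-1}x\|\leq\alpha^{\frac1{p-1}}\theta^{\frac1{p-1}}\}\Big)^{\frac1{p-1}}. \] Then $\Gamma_\theta(x)=(1/\Lambda_\theta(x))^{1/(p-1)}$ if $x\in\Omega$ and $\Gamma_\theta(x)=0$ otherwise, and $\Gamma_\theta$ is Lipschitz continuous on $\mathcal{H}$ with constant $\theta^{-1/(p-1)}$.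
   Context: $(I+\lambda A)^{-1}$ is the resolvent of $A$ of index $\lambda>0$. For $x\in\Omega$, the map $\lambda\mapsto\lambda^{1/(p-1)}\|x-(I+\lambda A)^{-1}x\|$ is a continuous strictly increasing bijection of $[0,\infty)$ onto $[0,\infty)$, so $\Lambda_\theta$ is well defined. *)

From HB Require Import structures.
From mathcomp Require Import all_boot all_order all_algebra.
From mathcomp Require Import all_classical all_reals all_analysis.
Set Implicit Arguments. Unset Strict Implicit. Unset Printing Implicit Defensive.
Import Order.TTheory GRing.Theory Num.Theory.
Import numFieldNormedType.Exports.
Local Open Scope classical_set_scope.
Local Open Scope ring_scope.

(* A real Hilbert space is a complete normed module V over R whose norm
   derives from an inner product ip. *)
Definition is_inner_product (R : realType) (V : normedModType R)
  (ip : V -> V -> R) : Prop :=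
  [/\ (forall x y, ip x y = ip y x),
      (forall (a : R) x y z, ip (a *: x + y) z = a * ip x z + ip y z)
    & (forall x, `|x| ^+ 2 = ip x x)].

(* set-valued operators A : V => V, given by their graph: A x u means u in Ax *)
Definition monotone_op (R : realType) (V : normedModType R)
  (ip : V -> V -> R) (A : V -> set V) : Prop :=
  forall x y u v, A x u -> A y v -> 0 <= ip (x - y) (u - v).

Definition maximal_monotone (R : realType) (V : normedModType R)
  (ip : V -> V -> R) (A : V -> set V) : Prop :=
  monotone_op ip A /\
  forall B : V -> set V, monotone_op ip B ->
    (forall x u, A x u -> B x u) -> forall x u, B x u -> A x u.

(* resolvent (I + lam A)^{-1} x : the y with x in y + lam A y,
   i.e. lam^-1 (x - y) in A y (single-valued for A maximal monotone, lam>0) *)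
Definition resolvent (R : realType) (V : normedModType R)
  (A : V -> set V) (lam : R) (x : V) : V :=
  xget 0 [set y | A y (lam^-1 *: (x - y))].

Definition ex (R : realType) (p : nat) : R := ((p.-1)%:R)^-1.

Definition Omega (R : realType) (V : normedModType R) (A : V -> set V) : set V :=
  [set x | ~ A x 0].

Definition Lambda (R : realType) (V : normedModType R) (A : V -> set V)
  (p : nat) (theta : R) (x : V) : R :=
  xget 0 [set lam : R | 0 < lam /\
     lam `^ ex R p * `|x - resolvent A lam x| = theta `^ ex R p].

Definition Gamma (R : realType) (V : normedModType R) (A : V -> set V)
  (p : nat) (theta : R) (x : V) : R :=
  (inf [set alpha : R | 0 < alpha /\
     `|x - resolvent A alpha^-1 x| <= alpha `^ ex R p * theta `^ ex R p])
  `^ ex R p.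

(* By Minty's theorem every resolvent J_lam = (I + lam A)^-1 of the maximal
   monotone operator A is everywhere defined; we prove it by minimizing the
   energy c + (|x|^2 + |u|^2) / 2 over the triples (x, u, c) with c above the
   Fitzpatrick function of A, a minimizer giving a zero of I + A.
   The residual |x - J_lam x| is then continuous and nondecreasing in lam,
   vanishes exactly when 0 is in Ax, and I - J_lam is nonexpansive. For x in
   Omega, lam |-> lam^(1/(p-1)) |x - J_lam x| is thus continuous and strictly
   increasing, the intermediate value theorem provides Lambda_theta(x), and the
   set whose infimum defines Gamma_theta(x) is [1 / Lambda_theta(x), +oo).
   For the Lipschitz bound put c = Gamma_theta(x) + theta^(-1/(p-1)) |x - y|:
   nonexpansiveness of I - J_lam and monotonicity in lam show that c^(p-1)
   belongs to the set defining Gamma_theta(y), so Gamma_theta(y) <= c. *)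

From HB Require Import structures.
From mathcomp Require Import all_boot all_order all_algebra.
From mathcomp Require Import all_classical all_reals all_analysis.
From mathcomp Require Import ring lra.
Import Order.TTheory GRing.Theory Num.Theory.
Import numFieldNormedType.Exports.
Local Open Scope classical_set_scope.
Local Open Scope ring_scope.
Set Implicit Arguments. Unset Strict Implicit. Unset Printing Implicit Defensive.

Section InnerProduct.
Variables (R : realType) (V : normedModType R) (ip : V -> V -> R).
Hypothesis hip : is_inner_product ip.

Lemma ipC x y : ip x y = ip y x. Proof. by case: hip. Qed.
Lemma ipxx x : ip x x = `|x| ^+ 2. Proof. by case: hip. Qed.
Lemma ipDZl a x y z : ip (a *: x + y) z = a * ip x z + ip y z.
Proof. by case: hip. Qed.

Lemma ip0l z : ip 0 z = 0.
Proof. by have := ipDZl 1 0 0 z; rewrite scaler0 addr0 mul1r; lra. Qed.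
Lemma ipZl a x z : ip (a *: x) z = a * ip x z.
Proof. by have := ipDZl a x 0 z; rewrite !addr0 ip0l addr0. Qed.
Lemma ipDl x y z : ip (x + y) z = ip x z + ip y z.
Proof. by have := ipDZl 1 x y z; rewrite scale1r mul1r. Qed.
Lemma ipNl x z : ip (- x) z = - ip x z.
Proof. by rewrite -scaleN1r ipZl mulN1r. Qed.
Lemma ipBl x y z : ip (x - y) z = ip x z - ip y z.
Proof. by rewrite ipDl ipNl. Qed.
Lemma ip0r z : ip z 0 = 0. Proof. by rewrite ipC ip0l. Qed.
Lemma ipZr a x z : ip z (a *: x) = a * ip z x. Proof. by rewrite ipC ipZl ipC. Qed.
Lemma ipDr x y z : ip z (x + y) = ip z x + ip z y.
Proof. by rewrite ipC ipDl !(ipC z). Qed.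
Lemma ipNr x z : ip z (- x) = - ip z x. Proof. by rewrite ipC ipNl ipC. Qed.
Lemma ipBr x y z : ip z (x - y) = ip z x - ip z y. Proof. by rewrite ipDr ipNr. Qed.

Lemma ipBB x y u v : ip (x - y) (u - v) = ip x u - ip x v - ip y u + ip y v.
Proof. by rewrite !(ipBl, ipBr); ring. Qed.

Lemma sqr_normD x y : `|x + y| ^+ 2 = `|x| ^+ 2 + 2 * ip x y + `|y| ^+ 2.
Proof. by rewrite -!ipxx ipDl !ipDr (ipC y x); ring. Qed.
Lemma sqr_normB x y : `|x - y| ^+ 2 = `|x| ^+ 2 - 2 * ip x y + `|y| ^+ 2.
Proof. by rewrite -!ipxx ipBl !ipBr (ipC y x); ring. Qed.

Lemma sqr_norm_convex (a b : V) (t : R) :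
  `|(1 - t) *: a + t *: b| ^+ 2 =
  (1 - t) * `|a| ^+ 2 + t * `|b| ^+ 2 - t * (1 - t) * `|a - b| ^+ 2.
Proof.
rewrite -!ipxx !(ipDl, ipZl, ipDr, ipZr, ipNl, ipNr) (ipC b a); ring.
Qed.

Lemma cauchy_schwarz x y : ip x y <= `|x| * `|y|.
Proof.
have [->|nx0] := eqVneq x 0; first by rewrite ip0l normr0 mul0r.
have [->|ny0] := eqVneq y 0; first by rewrite ip0r normr0 mulr0.
have nxy : 0 < `|x| * `|y| by rewrite mulr_gt0 ?normr_gt0.
have := exprn_ge0 2 (normr_ge0 (`|y| *: x - `|x| *: y)).
rewrite sqr_normB !normrZ !normr_id ipZl ipZr; nra.
Qed.

Lemma norm_ip_le x y : `|ip x y| <= `|x| * `|y|.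
Proof.
rewrite ler_norml cauchy_schwarz andbT.
by have := cauchy_schwarz x (- y); rewrite ipNr normrN; lra.
Qed.

Lemma cvg_ipl (X : nat -> V) x v : X @ \oo --> x ->
  (fun n => ip (X n) v) @ \oo --> ip x v.
Proof.
move=> /cvgrPdist_le Xx; apply/cvgrPdist_le => eps eps0.
have nv := normr_ge0 v.
have d0 : 0 < eps / (`|v| + 1) by rewrite divr_gt0 //; lra.
near=> n; rewrite -ipBl; apply: le_trans (norm_ip_le _ _) _.
have : `|x - X n| <= eps / (`|v| + 1) by near: n; apply: Xx.
have : eps / (`|v| + 1) * `|v| <= eps.
  by rewrite mulrAC ler_pdivrMr ?ler_wpM2l; lra.
by nra.
Unshelve. all: by end_near.
Qed.

Lemma cvg_ipr (X : nat -> V) x v : X @ \oo --> x ->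
  (fun n => ip v (X n)) @ \oo --> ip v x.
Proof. by move=> Xx; rewrite ipC; under eq_fun do rewrite ipC; exact: cvg_ipl. Qed.

End InnerProduct.

Lemma cvg_sqr_norm (R : realType) (V : normedModType R) (X : nat -> V) x :
  X @ \oo --> x -> (fun n => `|X n| ^+ 2) @ \oo --> `|x| ^+ 2.
Proof. by move=> Xx; apply: cvgM; apply: cvg_norm. Qed.

Lemma harmonic_sqr_dist_cvg (R : realType) (V : completeNormedModType R)
    (K : R) (X : nat -> V) :
  (forall n k, `|X n - X k| ^+ 2 <= K * (n.+1%:R^-1 + k.+1%:R^-1)) ->
  cvg (X @ \oo).
Proof.
move=> XK; apply: cauchy_cvg; apply: cauchy_exP => eps eps0.
have k0 : 0 < `|K| + 1 by have := normr_ge0 K; lra.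
have d0 : 0 < eps ^+ 2 / (2 * (`|K| + 1)) by rewrite divr_gt0 ?exprn_gt0 ?mulr_gt0.
have [N _ hN] := near_infty_natSinv_lt (PosNum d0).
exists (X N); exists N => // n /= Nn; rewrite -ball_normE /ball_ /=.
have K_small : K * (N.+1%:R^-1 + n.+1%:R^-1) < eps ^+ 2.
  have := hN N (leqnn N); have := hN n Nn; rewrite /= !ltr_pdivlMr ?mulr_gt0 //.
  have : K * (N.+1%:R^-1 + n.+1%:R^-1) <= (`|K| + 1) * (N.+1%:R^-1 + n.+1%:R^-1).
    by rewrite ler_wpM2r ?addr_ge0 //; have := ler_norm K; lra.
  by move: (N.+1%:R^-1 : R) (n.+1%:R^-1 : R) (`|K|) => a b c; lra.
have := XK N n; move: K_small (normr_ge0 (X N - X n)).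
move: (K * _) (`|X N - X n|) => s d s_small d_ge0 d_le.
by rewrite ltNge; apply/negP => big; nra.
Qed.

Lemma ge0_of_small_perturbation (R : realType) (a b : R) : 0 <= b ->
  (forall t, 0 < t <= 1 -> 0 <= a + t * b) -> 0 <= a.
Proof.
move=> b0 Hab; rewrite leNgt; apply/negP => a_lt0.
have t0 : 0 < - a / (b - a) by rewrite divr_gt0; lra.
have t1 : - a / (b - a) <= 1 by rewrite ler_pdivrMr; lra.
have := Hab (- a / (b - a)); rewrite t0 t1 => /(_ isT).
have -> : a + - a / (b - a) * b = - (a ^+ 2 / (b - a)) by field; lra.
have : 0 < a ^+ 2 / (b - a) by rewrite divr_gt0 ?expr2 ?nmulr_rgt0 //; lra.
by lra.
Qed.

Section Minty.
Variables (R : realType) (V : completeNormedModType R) (ip : V -> V -> R).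
Hypothesis hip : is_inner_product ip.
Variable G : V -> set V.
Hypothesis Gmono : monotone_op ip G.
Hypothesis Gmax : forall x u,
  (forall y v, G y v -> 0 <= ip (x - y) (u - v)) -> G x u.

Definition fitzpatrick_le x u c :=
  forall y v, G y v -> ip x v + ip y u - ip y v <= c.

Definition energy (x u : V) (c : R) := c + (`|x| ^+ 2 + `|u| ^+ 2) / 2.

Lemma graph_nonempty : exists y v, G y v.
Proof.
have [//|no_graph] := pselect (exists y v, G y v).
by exists 0, 0; apply: Gmax => y v Gyv; exfalso; apply: no_graph; exists y, v.
Qed.

Lemma fitzpatrick_le_graph y v : G y v -> fitzpatrick_le y v (ip y v).
Proof. by move=> Gyv y' v' Gyv'; have := Gmono Gyv Gyv'; rewrite ipBB //; lra. Qed.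

Lemma fitzpatrick_le_ip x u c : fitzpatrick_le x u c -> ip x u <= c.
Proof.
move=> Fxu; rewrite leNgt; apply/negP => c_lt.
have Gxu : G x u.
  by apply: Gmax => y v Gyv; have := Fxu y v Gyv; rewrite ipBB //; lra.
by have := Fxu x u Gxu; lra.
Qed.

Lemma energy_ge0 x u c : fitzpatrick_le x u c -> 0 <= energy x u c.
Proof.
move=> /fitzpatrick_le_ip ipc; have := sqr_normD hip x u.
by have := exprn_ge0 2 (normr_ge0 (x + u)); rewrite /energy; lra.
Qed.

Lemma fitzpatrick_le_convex x u c x' u' c' t :
  fitzpatrick_le x u c -> fitzpatrick_le x' u' c' -> 0 <= t <= 1 ->
  fitzpatrick_le ((1 - t) *: x + t *: x') ((1 - t) *: u + t *: u')
    ((1 - t) * c + t * c').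
Proof.
move=> Fxu Fxu' /andP[t0 t1] y v Gyv.
have := Fxu y v Gyv; have := Fxu' y v Gyv.
by rewrite !(ipDl hip, ipZl hip, ipDr hip, ipZr hip); nra.
Qed.

Lemma energy_convex x u c x' u' c' t :
  energy ((1 - t) *: x + t *: x') ((1 - t) *: u + t *: u') ((1 - t) * c + t * c') =
  (1 - t) * energy x u c + t * energy x' u' c'
  - t * (1 - t) * (`|x - x'| ^+ 2 + `|u - u'| ^+ 2) / 2.
Proof. by rewrite /energy !(sqr_norm_convex hip); ring. Qed.

Lemma fitzpatrick_le_closed X U C x u c :
  X @ \oo --> x -> U @ \oo --> u -> C @ \oo --> c ->
  (forall n, fitzpatrick_le (X n) (U n) (C n)) -> fitzpatrick_le x u c.
Proof.
move=> Xx Uu Cc FXUC y v Gyv.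
have lhs_cvg : (fun n => ip (X n) v + ip y (U n) - ip y v) @ \oo -->
               ip x v + ip y u - ip y v.
  by apply: cvgB; [apply: cvgD; [exact: cvg_ipl | exact: cvg_ipr] | exact: cvg_cst].
by apply: (ler_cvg_to lhs_cvg Cc); near=> n; apply: FXUC.
Unshelve. all: by end_near.
Qed.

Let energies := [set r | exists x u c, fitzpatrick_le x u c /\ r = energy x u c].

Let energies_has_inf : has_inf energies.
Proof.
split; last by exists 0 => _ [x [u [c [Fxu ->]]]]; apply: energy_ge0.
have [y [v Gyv]] := graph_nonempty.
by exists (energy y v (ip y v)), y, v, (ip y v); split => //; apply: fitzpatrick_le_graph.
Qed.

Let inf_energies_le x u c :
  fitzpatrick_le x u c -> inf energies <= energy x u c.
Proof. by move=> Fxu; apply: (ge_inf energies_has_inf.2); exists x, u, c. Qed.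

Let near_minimizers_close x u c x' u' c' :
  fitzpatrick_le x u c -> fitzpatrick_le x' u' c' ->
  `|x - x'| ^+ 2 + `|u - u'| ^+ 2 <=
  4 * ((energy x u c - inf energies) + (energy x' u' c' - inf energies)).
Proof.
move=> Fxu Fxu'; have half : 0 <= (2^-1 : R) <= 1 by apply/andP; split; lra.
have := inf_energies_le (fitzpatrick_le_convex Fxu Fxu' half).
rewrite energy_convex (_ : 1 - 2^-1 = 2^-1 :> R); last by field.
by lra.
Qed.

Let minimizing_sequence : exists X U C, forall n : nat,
  fitzpatrick_le (X n) (U n) (C n) /\
  energy (X n) (U n) (C n) < inf energies + n.+1%:R^-1.
Proof.
have approx n : exists t : V * V * R, fitzpatrick_le t.1.1 t.1.2 t.2 /\
    energy t.1.1 t.1.2 t.2 < inf energies + n.+1%:R^-1.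
  have n_gt0 : 0 < n.+1%:R^-1 :> R by rewrite invr_gt0.
  have [_ [x [u [c [Fxu ->]]]] lt_m] := inf_adherent n_gt0 energies_has_inf.
  by exists (x, u, c).
have [t t_spec] := choice approx.
by exists (fun n => (t n).1.1), (fun n => (t n).1.2), (fun n => (t n).2).
Qed.

Lemma energy_minimizer : exists x u c, fitzpatrick_le x u c /\
  forall x' u' c', fitzpatrick_le x' u' c' -> energy x u c <= energy x' u' c'.
Proof.
set m := inf energies.
have [X [U [C XUC]]] := minimizing_sequence.
have FXUC n : fitzpatrick_le (X n) (U n) (C n) := (XUC n).1.
have E_ub n : energy (X n) (U n) (C n) < m + n.+1%:R^-1 := (XUC n).2.
have E_lb n : m <= energy (X n) (U n) (C n) := inf_energies_le (FXUC n).
have XU_close n k : `|X n - X k| ^+ 2 + `|U n - U k| ^+ 2 <=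
    4 * (n.+1%:R^-1 + k.+1%:R^-1).
  have := near_minimizers_close (FXUC n) (FXUC k); rewrite -/m.
  have := E_ub n; have := E_ub k.
  by move: (n.+1%:R^-1 : R) (k.+1%:R^-1 : R) => a b; lra.
have /cvg_ex [x Xx] : cvg (X @ \oo).
  apply: (@harmonic_sqr_dist_cvg _ _ 4) => n k; have := XU_close n k.
  by have := exprn_ge0 2 (normr_ge0 (U n - U k)); move: (_ * _) => b; lra.
have /cvg_ex [u Uu] : cvg (U @ \oo).
  apply: (@harmonic_sqr_dist_cvg _ _ 4) => n k; have := XU_close n k.
  by have := exprn_ge0 2 (normr_ge0 (X n - X k)); move: (_ * _) => b; lra.
have E_cvg : (fun n => energy (X n) (U n) (C n)) @ \oo --> m.
  apply: (@squeeze_cvgr _ _ _ _ (cst m) (fun n => m + n.+1%:R^-1)).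
  - by near=> n; rewrite E_lb ltW.
  - exact: cvg_cst.
  - by rewrite -[X in _ --> X]addr0; apply: cvgD; [exact: cvg_cst | exact: cvg_harmonic].
have C_cvg : C @ \oo --> m - (`|x| ^+ 2 + `|u| ^+ 2) / 2.
  have -> : C = (fun n => energy (X n) (U n) (C n) - (`|X n| ^+ 2 + `|U n| ^+ 2) / 2).
    by apply/funext => n; rewrite /energy; ring.
  by apply: cvgB => //; apply: cvgMl; apply: cvgD; apply: cvg_sqr_norm.
exists x, u, (m - (`|x| ^+ 2 + `|u| ^+ 2) / 2); split.
  exact: fitzpatrick_le_closed Xx Uu C_cvg FXUC.
by move=> x' u' c' Fxu'; rewrite /energy -/m addrNK; apply: inf_energies_le.
Unshelve. all: by end_near.
Qed.

Lemma energy_minimizer_graph x u c :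
  fitzpatrick_le x u c ->
  (forall x' u' c', fitzpatrick_le x' u' c' -> energy x u c <= energy x' u' c') ->
  forall y v, G y v -> energy x u c + `|x + u| ^+ 2 / 2 <= ip (y + u) (v + x).
Proof.
move=> Fxu min_xu y v Gyv.
set m := energy x u c; set W := energy y v (ip y v).
set S := `|x - y| ^+ 2 + `|u - v| ^+ 2.
have S_ge0 : 0 <= S by rewrite addr_ge0 ?exprn_ge0.
have -> : ip (y + u) (v + x) = W - S / 2 + `|x + u| ^+ 2 / 2.
  rewrite /W /S /energy !(sqr_normB hip) (sqr_normD hip) !(ipDl hip) !(ipDr hip).
  by rewrite (ipC hip y x) (ipC hip u x) (ipC hip u v); lra.
(* minimality along the segment from (x, u, c) to (y, v, <y, v>) *)
suff : 0 <= W - m - S / 2 by lra.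
apply: (ge0_of_small_perturbation (b := S / 2)); first lra.
move=> t /andP[t0 t1]; have t01 : 0 <= t <= 1 by rewrite ltW.
have := min_xu _ _ _ (fitzpatrick_le_convex Fxu (fitzpatrick_le_graph Gyv) t01).
rewrite energy_convex -/m -/W -/S => le_m.
have : 0 <= t * (W - m - S / 2 + t * (S / 2)) by nra.
by rewrite pmulr_rge0.
Qed.

Theorem minty : exists x, G x (- x).
Proof.
have [x [u [c [Fxu min_xu]]]] := energy_minimizer.
have key := energy_minimizer_graph Fxu min_xu.
have E_ge0 := energy_ge0 Fxu.
have sqr_ge0 := exprn_ge0 2 (normr_ge0 (x + u)).
have Gux : G (- u) (- x).
  apply: Gmax => y v Gyv; have := key y v Gyv.
  have -> : ip (- u - y) (- x - v) = ip (y + u) (v + x).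
    by rewrite -opprD -(opprD x) (ipNl hip) (ipNr hip) opprK addrC (addrC x).
  by lra.
have := key _ _ Gux; rewrite addNr (ip0l hip) => le0.
have : `|x + u| ^+ 2 == 0 by rewrite eq_le sqr_ge0 andbT; lra.
rewrite sqrf_eq0 normr_eq0 addr_eq0 => /eqP u_eq.
by exists x; rewrite {1}u_eq.
Qed.

End Minty.

Definition residual (R : realType) (V : normedModType R) (A : V -> set V)
  (lam : R) (x : V) : R := `|x - resolvent A lam x|.

Section Resolvent.
Variables (R : realType) (V : completeNormedModType R) (ip : V -> V -> R).
Hypothesis hip : is_inner_product ip.
Variable A : V -> set V.
Hypothesis hA : maximal_monotone ip A.

Local Notation J := (resolvent A).

Lemma maximal_monotone_mono : monotone_op ip A. Proof. by case: hA. Qed.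

Lemma maximal_monotone_max x u :
  (forall y v, A y v -> 0 <= ip (x - y) (u - v)) -> A x u.
Proof.
move=> Axu; pose B y v := A y v \/ (y = x /\ v = u).
apply: (hA.2 B); [|by left|by right].
move=> y y' v v' [Ayv|[-> ->]] [Ayv'|[-> ->]].
- exact: maximal_monotone_mono Ayv Ayv'.
- by have := Axu _ _ Ayv; rewrite -(opprB x) -(opprB u) (ipNl hip) (ipNr hip) opprK.
- exact: Axu.
- by rewrite subrr (ip0l hip).
Qed.

Lemma resolvent_graph lam x : 0 < lam -> A (J lam x) (lam^-1 *: (x - J lam x)).
Proof.
move=> lam0.
(* Minty's theorem for the shifted operator a |-> lam^-1 A (a + x) *)
pose G a w := A (a + x) (lam^-1 *: w).
have Gmono : monotone_op ip G.
  move=> a b w w' Gaw Gbw'; have := maximal_monotone_mono Gaw Gbw'.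
  rewrite -scalerBr (ipZr hip) opprD addrACA subrr addr0.
  by rewrite pmulr_rge0 // invr_gt0.
have Gmax a w : (forall b w', G b w' -> 0 <= ip (a - b) (w - w')) -> G a w.
  move=> Gaw; apply: maximal_monotone_max => y v Ayv.
  have Gy : G (y - x) (lam *: v) by rewrite /G subrK scalerA mulVf ?gt_eqF // scale1r.
  have := Gaw _ _ Gy; rewrite opprB addrA.
  have -> : w - lam *: v = lam *: (lam^-1 *: w - v).
    by rewrite scalerBr scalerA divff ?gt_eqF // scale1r.
  by rewrite (ipZr hip) pmulr_rge0.
have [a Ga] := minty hip Gmono Gmax.
apply: (xgetPex 0 (P := [set y | A y (lam^-1 *: (x - y))])).
by exists (a + x); rewrite /= opprD addrCA subrr addr0.
Qed.

Lemma resolvent_eq lam x y : 0 < lam -> A y (lam^-1 *: (x - y)) -> J lam x = y.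
Proof.
move=> lam0 Ay; have := maximal_monotone_mono (resolvent_graph x lam0) Ay.
rewrite -scalerBr (ipZr hip) pmulr_rge0 ?invr_gt0 //.
have -> : x - J lam x - (x - y) = - (J lam x - y).
  by rewrite !opprB addrC addrA subrK.
rewrite (ipNr hip) (ipxx hip) oppr_ge0.
by move=> le0; apply/eqP; rewrite -subr_eq0 -normr_eq0 -sqrf_eq0 eq_le le0 exprn_ge0.
Qed.

Lemma residual_eq0 lam x : 0 < lam -> residual A lam x = 0 <-> A x 0.
Proof.
move=> lam0; split => [/eqP|Ax0].
  rewrite normr_eq0 subr_eq0 => /eqP Jx.
  by have := resolvent_graph x lam0; rewrite -Jx subrr scaler0.
by rewrite /residual (@resolvent_eq lam x x lam0) ?subrr ?normr0 ?scaler0.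
Qed.

Lemma residual_gt0 lam x : 0 < lam -> ~ A x 0 -> 0 < residual A lam x.
Proof.
move=> lam0 nAx; rewrite lt_neqAle normr_ge0 andbT eq_sym.
by apply/eqP => /(residual_eq0 x lam0).
Qed.

Lemma resolvent_residual_nonexpansive lam x y : 0 < lam ->
  `|(x - J lam x) - (y - J lam y)| <= `|x - y|.
Proof.
move=> lam0.
have := maximal_monotone_mono (resolvent_graph x lam0) (resolvent_graph y lam0).
rewrite -scalerBr (ipZr hip) pmulr_rge0 ?invr_gt0 //.
set a := J lam x; set b := J lam y; set s := x - a; set t := y - b.
have xE : x = a + s by rewrite /s subrKC.
have yE : y = b + t by rewrite /t subrKC.
clearbody s t a b; subst x y; rewrite opprD addrACA.
(* |x - y|^2 = |a - b|^2 + 2 <a - b, s - t> + |s - t|^2, with <a - b, s - t> >= 0 *)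
have := sqr_normD hip (a - b) (s - t).
have := exprn_ge0 2 (normr_ge0 (a - b)).
move: (`|a - b + (s - t)|) (normr_ge0 (a - b + (s - t))) (`|s - t|) (normr_ge0 (s - t)).
by move=> D D0 E E0 h1 h2 h3; rewrite leNgt; apply/negP => lt; nra.
Qed.

Lemma residual_le_add lam x y : 0 < lam ->
  residual A lam y <= residual A lam x + `|x - y|.
Proof.
move=> lam0; have := resolvent_residual_nonexpansive y x lam0.
have := ler_normD (x - J lam x) ((y - J lam y) - (x - J lam x)).
by rewrite [_ + (_ - _)]addrC subrK /residual (distrC y x); lra.
Qed.

Lemma residual_nondecr lam mu x : 0 < lam -> lam <= mu ->
  residual A lam x <= residual A mu x.
Proof.
move=> lam0 lam_mu; have mu0 : 0 < mu := lt_le_trans lam0 lam_mu.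
have := maximal_monotone_mono (resolvent_graph x lam0) (resolvent_graph x mu0).
rewrite /residual; set s := x - J lam x; set t := x - J mu x.
have -> : J lam x - J mu x = t - s by rewrite /s /t opprB [RHS]addrC subrKA.
clearbody s t.
rewrite !(ipBl hip, ipBr hip, ipZr hip) (ipC hip s t) !(ipxx hip).
have := cauchy_schwarz hip t s.
have : mu^-1 <= lam^-1 by rewrite lef_pV2 ?posrE.
have : 0 < mu^-1 by rewrite invr_gt0.
move: (lam^-1) (mu^-1) (ip t s) (`|s|) (normr_ge0 s) (`|t|) (normr_ge0 t).
(* L |s|^2 + M |t|^2 <= (L + M) <s, t> and Cauchy-Schwarz force |s| <= |t| *)
move=> L M P S S0 T T0 M0 ML CS mono; rewrite leNgt; apply/negP => TS.
have h1 : (L + M) * P <= (L + M) * (S * T) by apply: ler_wpM2l; lra.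
have h2 : L * S <= M * T by nra.
by nra.
Qed.

Lemma residual_dist_le lam mu x : 0 < lam -> 0 < mu ->
  mu * `|residual A lam x - residual A mu x| <= `|mu - lam| * residual A mu x.
Proof.
move=> lam0 mu0.
have := maximal_monotone_mono (resolvent_graph x lam0) (resolvent_graph x mu0).
rewrite /residual; set s := x - J lam x; set t := x - J mu x.
have -> : J lam x - J mu x = t - s by rewrite /s /t opprB [RHS]addrC subrKA.
clearbody s t.
have -> : lam^-1 *: s - mu^-1 *: t = (lam * mu)^-1 *: (mu *: s - lam *: t).
  by rewrite scalerBr !scalerA invfM divfK ?gt_eqF // mulrAC mulVf ?gt_eqF // mul1r.
rewrite (ipZr hip) pmulr_rge0 ?invr_gt0 ?mulr_gt0 //.
have -> : ip (t - s) (mu *: s - lam *: t) =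
          - mu * `|t - s| ^+ 2 + (mu - lam) * ip (t - s) t.
  rewrite (sqr_normB hip) !(ipBl hip, ipBr hip, ipZr hip) (ipC hip s t).
  by rewrite !(ipxx hip); ring.
move=> mono; apply: le_trans (_ : mu * `|t - s| <= _).
  by rewrite ler_pM2l // (distrC t s) ler_dist_dist.
have : (mu - lam) * ip (t - s) t <= `|mu - lam| * (`|t - s| * `|t|).
  by rewrite (le_trans (ler_norm _)) // normrM ler_wpM2l ?norm_ip_le.
move: mono; move: (ip (t - s) t) (`|t - s|) (normr_ge0 (t - s)) (`|t|) (normr_ge0 t).
move: (`|mu - lam|) (normr_ge0 (mu - lam)) => K K0 P D D0 T T0 mono le_K.
have [->|D_neq0] := eqVneq D 0; first by rewrite mulr0 mulr_ge0.
have D_gt0 : 0 < D by rewrite lt_neqAle eq_sym D_neq0.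
by nra.
Qed.

Lemma residual_cvg x (mu : R) : 0 < mu ->
  residual A lam x @[lam --> mu] --> residual A mu x.
Proof.
move=> mu0; apply/cvgrPdist_le => eps eps0.
have k_ge0 : 0 <= residual A mu x / mu.
  by apply: divr_ge0; [exact: normr_ge0 | exact: ltW].
have d0 : 0 < eps / (residual A mu x / mu + 1).
  by apply: divr_gt0 => //; apply: ltr_wpDl k_ge0 ltr01.
near=> lam.
have lam0 : 0 < lam by near: lam; exact: lt_nbhsr.
have near_mu : `|mu - lam| <= eps / (residual A mu x / mu + 1).
  by near: lam; apply: (cvgrPdist_le _ _).1 cvg_id _ d0.
have : `|mu - lam| * (residual A mu x / mu) <= eps.
  move: (residual A mu x / mu) k_ge0 near_mu => k k_ge0 near_mu.
  apply: le_trans (_ : eps / (k + 1) * k <= _); first by rewrite ler_wpM2r.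
  by rewrite mulrAC ler_pdivrMr ?ler_wpM2l ?ltW //; lra.
rewrite -(ler_pM2l mu0) mulrCA [mu * (_ / _)]mulrCA mulfV ?gt_eqF // mulr1 => le_eps.
by rewrite distrC -(ler_pM2l mu0); apply: le_trans (residual_dist_le x lam0 mu0) _.
Unshelve. all: by end_near.
Qed.

End Resolvent.

Lemma powRK (R : realType) (s c : R) : s != 0 -> 0 <= c -> (c `^ s) `^ s^-1 = c.
Proof. by move=> s0 c0; rewrite -powRrM divff // powRr1. Qed.

Lemma powRVK (R : realType) (s c : R) : s != 0 -> 0 <= c -> (c `^ s^-1) `^ s = c.
Proof. by move=> s0 c0; rewrite -powRrM mulVf // powRr1. Qed.

Lemma powRV_mul (R : realType) (s a : R) : 0 < a -> a^-1 `^ s * a `^ s = 1.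
Proof. by move=> a0; rewrite -powRM ?invr_ge0 ?ltW // mulVf ?gt_eqF // powR1. Qed.

Section Gamma.
Variables (R : realType) (V : completeNormedModType R) (ip : V -> V -> R).
Hypothesis hip : is_inner_product ip.
Variable A : V -> set V.
Hypothesis hA : maximal_monotone ip A.
Variables (p : nat) (theta : R).
Hypothesis p_gt1 : (1 < p)%N.
Hypothesis theta_gt0 : 0 < theta.

Local Notation e := (ex R p).
Local Notation Gamma := (Gamma A p theta).
Local Notation Lambda := (Lambda A p theta).
Let r : R := (p.-1)%:R.

Let r_neq0 : r != 0.
Proof. by rewrite pnatr_eq0 -lt0n -ltnS prednK // ltnW. Qed.

Let e_gt0 : 0 < e.
Proof. by rewrite invr_gt0 lt_neqAle eq_sym r_neq0 ler0n. Qed.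

Let powRK_r c : 0 <= c -> (c `^ r) `^ e = c. Proof. exact: powRK. Qed.
Let powRK_e c : 0 <= c -> (c `^ e) `^ r = c. Proof. exact: powRVK. Qed.

Let powRe_le a b : 0 <= a -> a <= b -> a `^ e <= b `^ e.
Proof.
by move=> a0 ab; rewrite ge0_ler_powR ?nnegrE ?(ltW e_gt0) ?(le_trans a0 ab).
Qed.

Let powRr_le a b : 0 <= a -> a <= b -> a `^ r <= b `^ r.
Proof. by move=> a0 ab; rewrite ge0_ler_powR ?nnegrE ?ler0n ?(le_trans a0 ab). Qed.

Let theta_e_gt0 : 0 < theta `^ e. Proof. exact: powR_gt0. Qed.

Let scaled_residual x lam := lam `^ e * residual A lam x.

Let scaled_residual_cvg x (mu : R) : 0 < mu ->
  scaled_residual x lam @[lam --> mu] --> scaled_residual x mu.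
Proof.
move=> mu0; apply: cvgM; last exact: (residual_cvg hip hA mu0).
have : differentiable (fun a : R => a `^ e) mu.
  by apply/derivable1_diffP; apply: derivable_powR; rewrite in_itv /= mu0.
exact: differentiable_continuous.
Qed.

Let scaled_residual_powR_le x c : 0 < c <= 1 ->
  scaled_residual x (c `^ r) <= c * residual A 1 x.
Proof.
case/andP=> c0 c1; rewrite /scaled_residual powRK_r ?(ltW c0) // ler_pM2l //.
apply: (residual_nondecr hip hA); first exact: powR_gt0.
by have := powRr_le (ltW c0) c1; rewrite powR1.
Qed.

Let scaled_residual_powR_ge x c : 1 <= c ->
  c * residual A 1 x <= scaled_residual x (c `^ r).
Proof.
move=> c1; have c0 : 0 < c by apply: lt_le_trans c1.
rewrite /scaled_residual powRK_r ?(ltW c0) // ler_pM2l //.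
by apply: (residual_nondecr hip hA) => //; have := powRr_le ler01 c1; rewrite powR1.
Qed.

Let scaled_residual_attains x : ~ A x 0 ->
  exists2 L, 0 < L & scaled_residual x L = theta `^ e.
Proof.
move=> nAx; have g1 := residual_gt0 hip hA ltr01 nAx.
set q := theta `^ e / residual A 1 x.
have q0 : 0 < q by rewrite divr_gt0.
set a := (Order.min 1 q) `^ r; set b := (Order.max 1 q) `^ r.
have a0 : 0 < a by rewrite powR_gt0 // lt_min ltr01.
have fa : scaled_residual x a <= theta `^ e.
  apply: le_trans (scaled_residual_powR_le x _) _;
    first by rewrite ge_min lexx lt_min ltr01 q0.
  by rewrite -[X in _ <= X](divfK (lt0r_neq0 g1)) ler_pM2r // -/q ge_min lexx orbT.
have fb : theta `^ e <= scaled_residual x b.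
  apply: le_trans (scaled_residual_powR_ge x _); last by rewrite le_max lexx.
  by rewrite -[X in X <= _](divfK (lt0r_neq0 g1)) ler_pM2r // -/q le_max lexx orbT.
have ab : a <= b.
  by apply: powRr_le; [rewrite le_min ler01 ltW | rewrite ge_min le_max lexx].
have f_cont : {within `[a, b], continuous (scaled_residual x)}.
  apply: continuous_in_subspaceT => z; rewrite inE /= in_itv /= => /andP[az _].
  exact/scaled_residual_cvg/(lt_le_trans a0 az).
have [|L] := IVT (v := theta `^ e) ab f_cont; first by rewrite ge_min fa le_max fb orbT.
by rewrite in_itv /= => /andP[aL _] fL; exists L => //; apply: lt_le_trans aL.
Qed.

Lemma Lambda_spec x : ~ A x 0 ->
  0 < Lambda x /\ scaled_residual x (Lambda x) = theta `^ e.
Proof.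
move=> nAx; have [L L0 fL] := scaled_residual_attains nAx.
apply: (xgetPex 0 (P := [set lam | 0 < lam /\ scaled_residual x lam = theta `^ e])).
by exists L.
Qed.

Let Gamma_set x :=
  [set alpha : R | 0 < alpha /\ residual A alpha^-1 x <= alpha `^ e * theta `^ e].

Let GammaE x : Gamma x = inf (Gamma_set x) `^ e. Proof. by []. Qed.

Lemma Gamma_ge0 x : 0 <= Gamma x. Proof. exact: powR_ge0. Qed.

Lemma Gamma_le x c : 0 < c -> residual A (c `^ r)^-1 x <= c * theta `^ e -> Gamma x <= c.
Proof.
move=> c0 le_c.
have Sc : Gamma_set x (c `^ r) by split; [exact: powR_gt0 | rewrite powRK_r ?(ltW c0)].
have lbS : lbound (Gamma_set x) 0 by move=> al [/ltW].
rewrite GammaE -[X in _ <= X](powRK_r (ltW c0)).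
apply: powRe_le; first by apply: lb_le_inf => //; exists (c `^ r).
by apply: ge_inf => //; exists 0.
Qed.

Lemma Gamma_zero x : A x 0 -> Gamma x = 0.
Proof.
move=> Ax0; apply/le_anti; rewrite Gamma_ge0 andbT.
apply/ler_addgt0Pr => c c0; rewrite add0r.
apply: Gamma_le => //; rewrite (proj2 (residual_eq0 hip hA _ _)) ?invr_gt0 ?powR_gt0 //.
by apply: mulr_ge0; [exact: ltW | exact: powR_ge0].
Qed.

Lemma Lambda_inv_in x : ~ A x 0 -> Gamma_set x (Lambda x)^-1.
Proof.
move=> nAx; have [L0 fL] := Lambda_spec nAx.
split; first by rewrite invr_gt0.
by rewrite invrK -fL /scaled_residual mulrA powRV_mul // mul1r.
Qed.

Lemma Lambda_inv_le x al : ~ A x 0 -> Gamma_set x al -> (Lambda x)^-1 <= al.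
Proof.
move=> nAx [al0 Sal]; have [L0 fL] := Lambda_spec nAx.
rewrite leNgt; apply/negP => lt_al.
have L_lt : Lambda x < al^-1 by rewrite -[Lambda x]invrK ltf_pV2 ?posrE ?invr_gt0.
have le_residual := residual_nondecr hip hA x L0 (ltW L_lt).
have lt_pow : Lambda x `^ e < al^-1 `^ e.
  by apply: (gt0_ltr_powR e_gt0) => //; rewrite nnegrE ?invr_ge0; apply: ltW.
have : scaled_residual x (Lambda x) < scaled_residual x al^-1.
  apply: lt_le_trans (_ : al^-1 `^ e * residual A (Lambda x) x <= _).
    by rewrite ltr_pM2r ?(residual_gt0 hip hA L0 nAx).
  by rewrite ler_wpM2l ?powR_ge0.
have : scaled_residual x al^-1 <= theta `^ e.
  rewrite /scaled_residual -[X in _ <= X]mul1r -(powRV_mul e al0) -mulrA.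
  by rewrite ler_wpM2l ?powR_ge0.
by rewrite fL; lra.
Qed.

Lemma Gamma_nonzero x : ~ A x 0 -> Gamma x = (Lambda x)^-1 `^ e.
Proof.
move=> nAx; rewrite GammaE; congr (_ `^ _); apply/le_anti.
have Lambda_inv_lb : lbound (Gamma_set x) (Lambda x)^-1.
  by move=> al; apply: Lambda_inv_le.
rewrite ge_inf /=; [|by exists (Lambda x)^-1|exact: Lambda_inv_in].
by apply: lb_le_inf => //; exists (Lambda x)^-1; apply: Lambda_inv_in.
Qed.

Lemma residual_le_Gamma x c : 0 < c -> Gamma x <= c ->
  residual A (c `^ r)^-1 x <= Gamma x * theta `^ e.
Proof.
move=> c0 le_c; have [Ax0|nAx] := pselect (A x 0).
  by rewrite Gamma_zero // mul0r (proj2 (residual_eq0 hip hA _ _)) ?invr_gt0 ?powR_gt0.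
have [L_gt0 _] := Lambda_spec nAx; have [a_gt0 Sa] := Lambda_inv_in nAx.
rewrite Gamma_nonzero // in le_c *; apply: le_trans Sa.
apply: (residual_nondecr hip hA); first by rewrite invr_gt0 powR_gt0.
rewrite lef_pV2 ?posrE ?powR_gt0 // -[X in X <= _](powRK_e (ltW a_gt0)).
by rewrite powRr_le ?powR_ge0.
Qed.

Lemma Gamma_le_add x y : Gamma y <= Gamma x + theta `^ (- e) * `|x - y|.
Proof.
have [->|xy] := eqVneq x y; first by rewrite subrr normr0 mulr0 addr0.
have K_gt0 : 0 < theta `^ (- e) by exact: powR_gt0.
have Ktheta : theta `^ (- e) * theta `^ e = 1 by rewrite powRN mulVf ?gt_eqF.
set c := Gamma x + theta `^ (- e) * `|x - y|.
have c_gt0 : 0 < c.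
  by apply: ltr_wpDl (Gamma_ge0 x) _; rewrite mulr_gt0 // normr_gt0 subr_eq0.
have le_c : Gamma x <= c by rewrite lerDl mulr_ge0 ?powR_ge0.
have lam0 : 0 < (c `^ r)^-1 by rewrite invr_gt0 powR_gt0.
apply: Gamma_le => //; apply: le_trans (residual_le_add hip hA x y lam0) _.
rewrite {2}/c mulrDl mulrAC Ktheta mul1r lerD2r.
exact: residual_le_Gamma c_gt0 le_c.
Qed.

Lemma Gamma_lipschitz x y :
  `|Gamma x - Gamma y| <= theta `^ (- e) * `|x - y|.
Proof.
have := Gamma_le_add x y; have := Gamma_le_add y x; rewrite distrC ler_norml.
by move: (Gamma x) (Gamma y) (theta `^ (- e) * _) => a b d ? ?; apply/andP; split; lra.
Qed.

End Gamma.

Theorem lemma2p3 (R : realType) (V : completeNormedModType R)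
  (ip : V -> V -> R) (A : V -> set V) (p : nat) (theta : R) :
  is_inner_product ip -> maximal_monotone ip A -> (2 <= p)%N ->
  0 < theta < 1 ->
  (forall x, x \in Omega A ->
     Gamma A p theta x = (1 / Lambda A p theta x) `^ ex R p) /\
  (forall x, x \notin Omega A -> Gamma A p theta x = 0) /\
  (forall x y, `|Gamma A p theta x - Gamma A p theta y|
                 <= theta `^ (- ex R p) * `|x - y|).
Proof.
move=> hip hA p_gt1 /andP[theta_gt0 _]; split; [|split].
- by move=> x /set_mem nAx; rewrite div1r (Gamma_nonzero hip hA p_gt1 theta_gt0 nAx).
- move=> x; rewrite notin_setE /= => /contrapT Ax0.
  exact: (Gamma_zero hip hA theta p_gt1 Ax0).
- exact: (Gamma_lipschitz hip hA p_gt1 theta_gt0).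
Qed.
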